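(* Let $n,m\ge2$, $s>0$. The function $f:\Omega_{L_n,m}\to\mathbb R$, \[f(\xi)=\sum_{k=1}^{n-1}\sin\Big(\frac{\pi k}{n}\Big)\Big(\sum_{i=1}^k\xi(i)-\frac{mk}{n}\Big),\] is an eigenfunction of the generator $\mathcal L^{\mathrm{BB}(L_n,s,m)}$ with eigenvalue $\lambda=\frac{1}{n-1}\big(\cos(\pi/n)-1\big)$, i.e. $\mathcal L^{\mathrm{BB}(L_n,s,m)}f=\lambda f$.
   Context: $L_n$ is the line graph on $\{1,\dots,n\}$ with edges $\{k,k+1\}$, all weights 1. $\Omega_{L_n,m}=\{\xi\in\mathbb N_0^{\{1,\dots,n\}}:\sum_i\xi(i)=m\}$. $\mathcal L^{\mathrm{BB}(L_n,s,m)}g=\sum_{k=1}^{n-1}\frac{1}{n-1}(\mathcal P_{\{k,k+1\}}g-g)$, where $\mathcal P_{\{k,k+1\}}g(\xi)=\mathbb E[g(\xi')]$ with $\xi'(k)=X$, $\xi'(k+1)=\xi(k)+\xi(k+1)-X$, $\xi'(j)=\xi(j)$ otherwise, and $X\sim\mathrm{BetaBin}(\xi(k)+\xi(k+1),s,s)$. *)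

From Stdlib Require Import Reals Lra Lia List Arith.
Open Scope R_scope.

(* Sum of F i over lo <= i <= hi (empty if hi < lo). *)
Definition sumR (lo hi : nat) (F : nat -> R) : R :=
  fold_right (fun i acc => F i + acc) 0 (seq lo (S hi - lo)).

Definition sumN (lo hi : nat) (F : nat -> nat) : nat :=
  fold_right (fun i acc => (F i + acc)%nat) 0%nat (seq lo (S hi - lo)).

Fixpoint rising (x : R) (k : nat) : R :=
  match k with
  | O => 1
  | S k' => rising x k' * (x + INR k')
  end.

(* Beta-binomial pmf BetaBin(N, a, b) at j:
   C(N,j) B(j+a, N-j+b)/B(a,b) = C(N,j) (a)_j (b)_(N-j) / (a+b)_N. *)
Definition betabin_pmf (N : nat) (a b : R) (j : nat) : R :=
  C N j * rising a j * rising b (N - j) / rising (a + b) N.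

(* Configurations: xi : nat -> nat, sites 1..n. *)
Definition config := nat -> nat.

Definition upd (xi : config) (k x : nat) : config :=
  fun j => if Nat.eqb j k then x
           else if Nat.eqb j (S k) then (xi k + xi (S k) - x)%nat
           else xi j.

Definition P_edge (s : R) (k : nat) (g : config -> R) (xi : config) : R :=
  let N := (xi k + xi (S k))%nat in
  sumR 0 N (fun x => betabin_pmf N s s x * g (upd xi k x)).

Definition gen_BB (n : nat) (s : R) (g : config -> R) (xi : config) : R :=
  sumR 1 (n - 1) (fun k => / INR (n - 1) * (P_edge s k g xi - g xi)).

Definition in_Omega (n m : nat) (xi : config) : Prop :=
  (forall i, (i = 0 \/ n < i)%nat -> xi i = 0%nat) /\ sumN 1 n xi = m.

Definition f_eig (n m : nat) (xi : config) : R :=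
  sumR 1 (n - 1) (fun k =>
    sin (PI * INR k / INR n) *
    (sumR 1 k (fun i => INR (xi i)) - INR m * INR k / INR n)).

(* Write h_k = xi(1) + ... + xi(k) for the height function and
   T_k = h_k - m k / n for its centred version, so that
   f = sum_{k=1}^{n-1} a_k T_k with the sine mode a_k = sin(pi k / n).

   1. Resampling the edge {k,k+1} moves the height h_k alone, by X - xi(k);
      hence f(xi') - f(xi) = a_k (X - xi(k)) is affine in X.
   2. BetaBin(N,s,s) is a probability law (Chu-Vandermonde identity for rising
      factorials) and is symmetric under j <-> N - j, so its mean is N/2.
      Therefore P_{k,k+1} f - f = a_k (xi(k+1) - xi(k)) / 2.
   3. xi(k+1) - xi(k) is the discrete Laplacian of T at k, T vanishes at 0 and
      at n (total mass m), and a is a Dirichlet eigenvector of that Laplacian: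
      a_{k-1} + a_{k+1} = 2 cos(pi/n) a_k with a_0 = a_n = 0.  Summation by
      parts then gives sum_k a_k (xi(k+1) - xi(k)) = 2 (cos(pi/n) - 1) f. *)

From Stdlib Require Import Reals Lra Lia List.
Open Scope R_scope.

Lemma sumR_nil lo hi F : (hi < lo)%nat -> sumR lo hi F = 0.
Proof. intros H; unfold sumR; replace (S hi - lo)%nat with 0%nat by lia; reflexivity. Qed.

Lemma sumR_first lo hi F : (lo <= hi)%nat -> sumR lo hi F = F lo + sumR (S lo) hi F.
Proof.
  intros H; unfold sumR.
  replace (S hi - lo)%nat with (S (S hi - S lo)) by lia; reflexivity.
Qed.

Lemma sumR_S lo hi F : (lo <= S hi)%nat -> sumR lo (S hi) F = sumR lo hi F + F (S hi).
Proof.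
  intros H; unfold sumR.
  replace (S (S hi) - lo)%nat with (S (S hi - lo)) by lia.
  rewrite seq_S, fold_right_app.
  replace (lo + (S hi - lo))%nat with (S hi) by lia; simpl (fold_right _ 0 (S hi :: nil)).
  generalize (seq lo (S hi - lo)); intro l; induction l as [|i l IH]; simpl.
  - ring.
  - rewrite IH; ring.
Qed.

Lemma sumR_shift lo hi F : sumR (S lo) (S hi) F = sumR lo hi (fun j => F (S j)).
Proof.
  unfold sumR; rewrite Nat.sub_succ, <- seq_shift.
  generalize (seq lo (S hi - lo)); intro l; induction l as [|i l IH]; simpl.
  - reflexivity.
  - rewrite IH; reflexivity.
Qed.

Lemma sumR_ext lo hi F G : (forall i, (lo <= i <= hi)%nat -> F i = G i) ->
  sumR lo hi F = sumR lo hi G.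
Proof.
  intros H; unfold sumR.
  assert (Hin : forall i, In i (seq lo (S hi - lo)) -> F i = G i)
    by (intros i Hi; apply in_seq in Hi; apply H; lia).
  revert Hin; generalize (seq lo (S hi - lo)); intro l.
  induction l as [|i l IH]; intros Hin; simpl.
  - reflexivity.
  - rewrite (Hin i) by (simpl; auto).
    rewrite IH by (intros j Hj; apply Hin; simpl; auto); reflexivity.
Qed.

Lemma sumR_plus lo hi F G :
  sumR lo hi (fun i => F i + G i) = sumR lo hi F + sumR lo hi G.
Proof.
  unfold sumR; generalize (seq lo (S hi - lo)); intro l.
  induction l as [|i l IH]; simpl; [ring | rewrite IH; ring].
Qed.

Lemma sumR_scal lo hi F u : sumR lo hi (fun i => u * F i) = u * sumR lo hi F.
Proof.
  unfold sumR; generalize (seq lo (S hi - lo)); intro l.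
  induction l as [|i l IH]; simpl; [ring | rewrite IH; ring].
Qed.

Lemma sumN_INR lo hi F : INR (sumN lo hi F) = sumR lo hi (fun i => INR (F i)).
Proof.
  unfold sumN, sumR; generalize (seq lo (S hi - lo)); intro l.
  induction l as [|i l IH]; simpl; [reflexivity | rewrite plus_INR, IH; reflexivity].
Qed.

Lemma sumR_reflect N F : sumR 0 N F = sumR 0 N (fun j => F (N - j)%nat).
Proof.
  revert F; induction N as [|N IH]; intros F; [reflexivity|].
  rewrite sumR_S, (sumR_first 0 (S N)), sumR_shift, (IH F) by lia.
  rewrite Nat.sub_0_r; simpl; ring.
Qed.

Lemma sumR_telescope M g : sumR 1 M (fun k => g k - g (k - 1)%nat) = g M - g 0%nat.
Proof.
  induction M as [|M IH]; [rewrite sumR_nil by lia; ring|].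
  rewrite sumR_S, IH by lia; simpl; rewrite Nat.sub_0_r; ring.
Qed.

Lemma sumR_delta k c hi : (1 <= k)%nat ->
  sumR 1 hi (fun j => if Nat.eqb j k then c else 0) = if Nat.leb k hi then c else 0.
Proof.
  intros Hk; induction hi as [|hi IH].
  - rewrite sumR_nil by lia; destruct (Nat.leb_spec k 0); [lia | reflexivity].
  - rewrite sumR_S, IH by lia.
    destruct (Nat.eqb_spec (S hi) k), (Nat.leb_spec k hi), (Nat.leb_spec k (S hi));
      try lia; ring.
Qed.

Lemma rising_pos x k : 0 < x -> 0 < rising x k.
Proof.
  intros Hx; induction k as [|k IH]; simpl; [lra|].
  apply Rmult_lt_0_compat; [exact IH | pose proof (pos_INR k); lra].
Qed.

Lemma C_diag k : C k k = 1.
Proof. unfold C; rewrite Nat.sub_diag; simpl; field; apply INR_fact_neq_0. Qed.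

Lemma C_zero k : C k 0 = 1.
Proof. unfold C; rewrite Nat.sub_0_r; simpl; field; apply INR_fact_neq_0. Qed.

Lemma sum_pascal N G :
  sumR 0 (S N) (fun j => C (S N) j * G j) = sumR 0 N (fun j => C N j * (G j + G (S j))).
Proof.
  assert (Hshift : sumR 0 N (fun j => C N j * G (S j))
                   = sumR 1 N (fun j => C N (j - 1) * G j) + C N N * G (S N)).
  { transitivity (sumR 1 (S N) (fun j => C N (j - 1) * G j)).
    - rewrite sumR_shift; apply sumR_ext; intros j _; simpl; rewrite Nat.sub_0_r; reflexivity.
    - rewrite sumR_S by lia; simpl; rewrite Nat.sub_0_r; reflexivity. }
  rewrite (sumR_ext 0 N _ (fun j => C N j * G j + C N j * G (S j))) by (intros; ring).
  rewrite sumR_plus, Hshift, sumR_S, !(sumR_first 0) by lia.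
  rewrite !C_zero, !C_diag.
  rewrite (sumR_ext 1 N (fun j => C (S N) j * G j)
             (fun j => C N j * G j + C N (j - 1) * G j)).
  - rewrite sumR_plus; ring.
  - intros j Hj; rewrite <- Rmult_plus_distr_r; f_equal.
    replace j with (S (j - 1)) at 1 2 by lia.
    rewrite <- pascal by lia; replace (S (j - 1)) with j by lia; ring.
Qed.

Lemma rising_vandermonde a b N :
  sumR 0 N (fun j => C N j * (rising a j * rising b (N - j))) = rising (a + b) N.
Proof.
  induction N as [|N IH]; [unfold sumR; simpl; rewrite C_zero; ring|].
  rewrite sum_pascal; change (rising (a + b) (S N)) with (rising (a + b) N * (a + b + INR N)).
  rewrite <- IH, Rmult_comm, <- sumR_scal.
  apply sumR_ext; intros j Hj.
  replace (S N - j)%nat with (S (N - j)) by lia; rewrite Nat.sub_succ.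
  simpl rising; rewrite minus_INR by lia; ring.
Qed.

Lemma betabin_total N a b : 0 < a -> 0 < b -> sumR 0 N (betabin_pmf N a b) = 1.
Proof.
  intros Ha Hb.
  assert (Hpos : 0 < rising (a + b) N) by (apply rising_pos; lra).
  unfold betabin_pmf.
  rewrite (sumR_ext 0 N _ (fun j => / rising (a + b) N * (C N j * (rising a j * rising b (N - j)))))
    by (intros; unfold Rdiv; ring).
  rewrite sumR_scal, rising_vandermonde; field; lra.
Qed.

Lemma betabin_symmetric N s j : (j <= N)%nat -> betabin_pmf N s s (N - j) = betabin_pmf N s s j.
Proof.
  intros H; unfold betabin_pmf.
  replace (N - (N - j))%nat with j by lia.
  rewrite <- (pascal_step1 N j H); unfold Rdiv; ring.
Qed.

(* Hence BetaBin(N,s,s) has mean N/2. *)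
Lemma betabin_mean N s : 0 < s -> sumR 0 N (fun j => betabin_pmf N s s j * INR j) = INR N / 2.
Proof.
  intros Hs.
  assert (Hrefl := sumR_reflect N (fun j => betabin_pmf N s s j * INR j)); simpl in Hrefl.
  rewrite (sumR_ext 0 N (fun j => betabin_pmf N s s (N - j) * INR (N - j))
                        (fun j => INR N * betabin_pmf N s s j
                                    + -1 * (betabin_pmf N s s j * INR j))) in Hrefl.
  - rewrite sumR_plus, !sumR_scal, betabin_total in Hrefl by lra; lra.
  - intros j Hj; rewrite betabin_symmetric, minus_INR by lia; ring.
Qed.

Lemma P_edge_affine s k g xi c d : 0 < s ->
  (forall x, (x <= xi k + xi (S k))%nat -> g (upd xi k x) = c + d * INR x) ->
  P_edge s k g xi = c + d * INR (xi k + xi (S k)) / 2.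
Proof.
  intros Hs Hg; unfold P_edge.
  set (N := (xi k + xi (S k))%nat).
  rewrite (sumR_ext 0 N _ (fun x => c * betabin_pmf N s s x + d * (betabin_pmf N s s x * INR x))).
  - rewrite sumR_plus, !sumR_scal, betabin_total, betabin_mean by lra; field.
  - intros x Hx; rewrite Hg by (unfold N in Hx; lia); ring.
Qed.

Definition height (xi : config) (k : nat) : R := sumR 1 k (fun i => INR (xi i)).

Definition sine_mode (n k : nat) : R := sin (PI * INR k / INR n).

Definition centred_height (n m : nat) (xi : config) (k : nat) : R :=
  height xi k - INR m * INR k / INR n.

Lemma f_eig_modes n m xi :
  f_eig n m xi = sumR 1 (n - 1) (fun k => sine_mode n k * centred_height n m xi k).
Proof. reflexivity. Qed.

Lemma height_upd xi k x : (1 <= k)%nat -> (x <= xi k + xi (S k))%nat -> forall j,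
  height (upd xi k x) j = height xi j + (if Nat.eqb j k then INR x - INR (xi k) else 0).
Proof.
  intros Hk Hx j; unfold height; induction j as [|j IH].
  - rewrite !sumR_nil by lia; destruct (Nat.eqb_spec 0 k); [lia | ring].
  - rewrite !sumR_S, IH by lia; unfold upd.
    destruct (Nat.eqb_spec (S j) k), (Nat.eqb_spec j k), (Nat.eqb_spec (S j) (S k));
      try lia; subst; try ring.
    rewrite minus_INR, plus_INR by lia; ring.
Qed.

Lemma f_eig_upd n m xi k x : (1 <= k <= n - 1)%nat -> (x <= xi k + xi (S k))%nat ->
  f_eig n m (upd xi k x) = f_eig n m xi + sine_mode n k * (INR x - INR (xi k)).
Proof.
  intros Hk Hx; rewrite !f_eig_modes.
  rewrite (sumR_ext 1 (n - 1) _ (fun j => sine_mode n j * centred_height n m xi j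
             + (if Nat.eqb j k then sine_mode n k * (INR x - INR (xi k)) else 0))).
  - rewrite sumR_plus, sumR_delta by lia.
    destruct (Nat.leb_spec k (n - 1)); [reflexivity | lia].
  - intros j _; unfold centred_height; rewrite height_upd by lia.
    destruct (Nat.eqb_spec j k); subst; ring.
Qed.

(* Averaging over X ~ BetaBin(N,s,s), whose mean is N/2. *)
Lemma P_edge_f_eig n m s xi k : 0 < s -> (1 <= k <= n - 1)%nat ->
  P_edge s k (f_eig n m) xi
  = f_eig n m xi + sine_mode n k * (INR (xi (S k)) - INR (xi k)) / 2.
Proof.
  intros Hs Hk.
  rewrite (P_edge_affine s k _ xi (f_eig n m xi - sine_mode n k * INR (xi k)) (sine_mode n k)).
  - rewrite plus_INR; field.
  - exact Hs.
  - intros x Hx; rewrite f_eig_upd by lia; ring.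
Qed.

Lemma summation_by_parts (a T : nat -> R) (c : R) (n : nat) : (1 <= n)%nat ->
  a 0%nat = 0 -> a n = 0 -> T 0%nat = 0 -> T n = 0 ->
  (forall k, (1 <= k <= n - 1)%nat -> a (k - 1)%nat + a (S k) = 2 * c * a k) ->
  sumR 1 (n - 1) (fun k => a k * (T (S k) + T (k - 1)%nat - 2 * T k))
  = (2 * c - 2) * sumR 1 (n - 1) (fun k => a k * T k).
Proof.
  intros Hn Ha0 Han HT0 HTn Hrec.
  set (g := fun k => a k * T (S k)).
  set (h := fun k => - (a (S k) * T k)).
  rewrite (sumR_ext 1 (n - 1) _ (fun k => (g k - g (k - 1)%nat)
             + ((h k - h (k - 1)%nat) + (2 * c - 2) * (a k * T k)))).
  - rewrite !sumR_plus, !sumR_telescope, sumR_scal.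
    unfold g, h; replace (S (n - 1)) with n by lia.
    rewrite Ha0, Han, HT0, HTn; ring.
  - intros k Hk; unfold g, h; replace (S (k - 1)) with k by lia.
    replace (a (k - 1)%nat) with (2 * c * a k - a (S k)) by (rewrite <- Hrec by lia; ring).
    ring.
Qed.

(* The Chebyshev recurrence sin(x - y) + sin(x + y) = 2 cos y sin x. *)
Lemma sine_mode_recurrence n k : (1 <= n)%nat -> (1 <= k)%nat ->
  sine_mode n (k - 1) + sine_mode n (S k) = 2 * cos (PI / INR n) * sine_mode n k.
Proof.
  intros Hn Hk; assert (INR n <> 0) by (apply not_0_INR; lia).
  unfold sine_mode.
  replace (PI * INR (k - 1) / INR n) with (PI * INR k / INR n - PI / INR n)
    by (rewrite minus_INR by lia; simpl; field; auto).
  replace (PI * INR (S k) / INR n) with (PI * INR k / INR n + PI / INR n)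
    by (rewrite S_INR; field; auto).
  rewrite sin_minus, sin_plus; ring.
Qed.

Lemma sine_mode_boundary n : (1 <= n)%nat -> sine_mode n 0 = 0 /\ sine_mode n n = 0.
Proof.
  intros Hn; assert (INR n <> 0) by (apply not_0_INR; lia).
  unfold sine_mode; split.
  - rewrite INR_0, Rmult_0_r, Rdiv_0_l; apply sin_0.
  - replace (PI * INR n / INR n) with PI by (field; auto); apply sin_PI.
Qed.

Lemma centred_height_boundary n m xi : (1 <= n)%nat -> height xi n = INR m ->
  centred_height n m xi 0 = 0 /\ centred_height n m xi n = 0.
Proof.
  intros Hn Hmass; assert (INR n <> 0) by (apply not_0_INR; lia).
  unfold centred_height; split.
  - unfold height; rewrite sumR_nil by lia; simpl; field; auto.
  - rewrite Hmass; field; auto.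
Qed.

Lemma centred_height_laplacian n m xi k : (1 <= k)%nat ->
  INR (xi (S k)) - INR (xi k)
  = centred_height n m xi (S k) + centred_height n m xi (k - 1) - 2 * centred_height n m xi k.
Proof.
  intros Hk; destruct k as [|k]; [lia|].
  unfold centred_height, height; rewrite Nat.sub_succ, Nat.sub_0_r.
  rewrite !sumR_S by lia; rewrite !S_INR; unfold Rdiv; ring.
Qed.

Theorem mainTheorem11 (n m : nat) (s : R) :
  (2 <= n)%nat -> (2 <= m)%nat -> 0 < s ->
  forall xi : config, in_Omega n m xi ->
  gen_BB n s (f_eig n m) xi =
  / INR (n - 1) * (cos (PI / INR n) - 1) * f_eig n m xi.
Proof.
  intros Hn _ Hs xi [_ Hmass].
  assert (Hn1 : INR (n - 1) <> 0) by (apply not_0_INR; lia).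
  assert (Hheight : height xi n = INR m)
    by (unfold height; rewrite <- sumN_INR, Hmass; reflexivity).
  destruct (sine_mode_boundary n) as [Ha0 Han]; [lia|].
  destruct (centred_height_boundary n m xi) as [HT0 HTn]; [lia | exact Hheight|].
  (* Each edge contributes a_k (xi(k+1) - xi(k)) / 2, a Laplacian of T. *)
  unfold gen_BB.
  rewrite (sumR_ext 1 (n - 1) _ (fun k => / INR (n - 1) / 2 * (sine_mode n k *
             (centred_height n m xi (S k) + centred_height n m xi (k - 1)
              - 2 * centred_height n m xi k)))).
  2:{ intros k Hk; rewrite P_edge_f_eig, <- centred_height_laplacian by (assumption || lia); field; exact Hn1. }
  (* Summation by parts against the Dirichlet eigenvector a. *)
  rewrite sumR_scal, (summation_by_parts _ _ (cos (PI / INR n))); try (assumption || lia).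
  - rewrite <- f_eig_modes; field; exact Hn1.
  - intros k Hk; apply sine_mode_recurrence; lia.
Qed.
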